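(* Let $T$ be a string, let $1\le j\le |T|$, $1\le i\le j+1$, let $w$ be a string, and let $L=T[1..i-1]$, $R=T[j+1..|T|]$ and $T'=LwR$. Assume $|L|\ge |R|$, $|w|\le |L|/2$, and that the longest border of $Lw$ is longer than $|w|$. Partition the set of borders of $Lw$ into groups $G_1,\dots,G_m$ so that two borders lie in the same group iff they have the same smallest period, and let $p_k$ be the common smallest period of the borders in $G_k$. Assume that $T'$ has a border longer than $R$, and let $b^\star$ be the border of $Lw$ such that $b^\star R$ is the longest border of $T'$; let $k^\star$ be the index of the group containing $b^\star$. Let $\alpha_{k^\star}$ be the exponent of the longest prefix of $T'$ having period $p_{k^\star}$. If $b^\star$ is periodic and $p_{k^\star}=\mathsf{per}(b^\star R)$, then $|b^\star|\le \alpha_{k^\star}p_{k^\star}-|R|$.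
   Context: $S[i..j]$ denotes the factor of $S$ from position $i$ to $j$ (empty if $i>j$). A border of a nonempty string $S$ is a string that is both a proper prefix and a proper suffix of $S$. If $S$ has a border $b$ then $|S|-|b|$ is a period of $S$; $\mathsf{per}(S)$ is the smallest period of $S$. The exponent of a string $S$ is the rational number $|S|/\mathsf{per}(S)$. $S$ is periodic if $\mathsf{per}(S)\le |S|/2$. A string $S$ has period $p$ if $S[t]=S[t+p]$ for all valid $t$. *)

From mathcomp Require Import all_boot all_order all_algebra.
Set Implicit Arguments. Unset Strict Implicit. Unset Printing Implicit Defensive.
Import Order.TTheory GRing.Theory Num.Theory.

Section Strings.
Variable A : eqType.

Definition has_period (S : seq A) (p : nat) : bool :=
  [forall t : 'I_(size S), (t + p < size S) ==> (onth S t == onth S (t + p))].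

Lemma has_period_exists (S : seq A) : exists p, (0 < p) && has_period S p.
Proof.
exists (size S).+1; apply/andP; split => //.
apply/forallP => t; apply/implyP => H; exfalso.
by move: H; rewrite ltnNge (leq_trans (leqnSn _) (leq_addl t _)).
Qed.

Definition per (S : seq A) : nat := ex_minn (has_period_exists S).

Definition border (b S : seq A) : bool :=
  [&& size b < size S, prefix b S & suffix b S].

Definition periodic (S : seq A) : bool := 2 * per S <= size S.

Definition exponent (S : seq A) : rat := (size S)%:R / (per S)%:R.

Definition longest_prefix_len_with_period (S : seq A) (p : nat) : nat :=
  \max_(n < (size S).+1 | has_period (take n S) p) n.

Definition longest_prefix_with_period (S : seq A) (p : nat) : seq A :=
  take (longest_prefix_len_with_period S p) S.

End Strings.

From mathcomp Require Import all_boot all_order all_algebra.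
Import Order.TTheory GRing.Theory Num.Theory.
Local Open Scope ring_scope.

(* Only two of the hypotheses matter: b* R is a prefix of T' (it is a border)
   and it has period p = per (b* R).  Hence the longest prefix of T' with
   period p has length n >= |b*| + |R|; its smallest period is at most p, so
   its exponent is at least n / p, i.e. alpha p >= n >= |b*| + |R|. *)

Section Periods.
Set Implicit Arguments.
Unset Strict Implicit.
Variable A : eqType.
Implicit Types (S u : seq A) (p : nat).

Lemma per_gt0 S : (0 < per S)%N.
Proof. by rewrite /per; case: ex_minnP => m /andP[]. Qed.

Lemma has_period_per S : has_period S (per S).
Proof. by rewrite /per; case: ex_minnP => m /andP[]. Qed.

Lemma per_leq S p : (0 < p)%N -> has_period S p -> (per S <= p)%N.
Proof. by move=> p_gt0 Sp; rewrite /per; case: ex_minnP => m _; apply; rewrite p_gt0. Qed.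

Lemma has_period_nil p : has_period (Nil A) p.
Proof. by apply/forallP => -[]. Qed.

Lemma size_leq_exponent S p :
  (0 < p)%N -> has_period S p -> (size S)%:R <= exponent S * p%:R.
Proof.
move=> p_gt0 Sp; rewrite /exponent mulrAC ler_pdivlMr ?ltr0n ?per_gt0 //.
by rewrite ler_wpM2l ?ler_nat ?per_leq.
Qed.

Lemma longest_prefix_len_with_period_leq S p :
  (longest_prefix_len_with_period S p <= size S)%N.
Proof. by apply/bigmax_leqP => n _; rewrite -ltnS. Qed.

Lemma size_longest_prefix_with_period S p :
  size (longest_prefix_with_period S p) = longest_prefix_len_with_period S p.
Proof.
by rewrite size_take_min; apply/minn_idPl; apply: longest_prefix_len_with_period_leq.
Qed.

Lemma has_period_longest_prefix S p :
  has_period (longest_prefix_with_period S p) p.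
Proof.
rewrite /longest_prefix_with_period /longest_prefix_len_with_period.
apply: (big_ind (fun n => has_period (take n S) p)) => //.
- by rewrite take0 has_period_nil.
- by move=> m n Hm Hn; rewrite /maxn; case: ifP.
Qed.

Lemma prefix_leq_longest_prefix_len u S p :
  prefix u S -> has_period u p -> (size u <= longest_prefix_len_with_period S p)%N.
Proof.
case/prefixP=> s ->{S} up.
have lt_u : (size u < (size (u ++ s)).+1)%N by rewrite ltnS size_cat leq_addr.
apply: (@leq_bigmax_cond _ _ (fun n : 'I_ _ => nat_of_ord n) (Ordinal lt_u)).
by rewrite /= take_size_cat.
Qed.

Lemma size_prefix_leq_exponent u S p :
  (0 < p)%N -> prefix u S -> has_period u p ->
  (size u)%:R <= exponent (longest_prefix_with_period S p) * p%:R.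
Proof.
move=> p_gt0 uS up.
apply: le_trans (size_leq_exponent p_gt0 (has_period_longest_prefix S p)).
by rewrite ler_nat size_longest_prefix_with_period prefix_leq_longest_prefix_len.
Qed.

End Periods.

Theorem lemma9 (A : eqType) (T w : seq A) (i j : nat) (bstar : seq A) :
  (1 <= j <= size T)%N ->
  (1 <= i <= j.+1)%N ->
  let L := take i.-1 T in
  let R := drop j T in
  let T' := L ++ w ++ R in
  (size R <= size L)%N ->
  (2 * size w <= size L)%N ->
  (* the longest border of Lw is longer than |w| *)
  (exists b, border b (L ++ w) && (size w < size b)%N) ->
  (* T' has a border longer than R *)
  (exists b, border b T' && (size R < size b)%N) ->
  (* b* is a border of Lw such that b* R is the longest border of T' *)
  border bstar (L ++ w) ->
  border (bstar ++ R) T' ->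
  (forall b, border b T' -> (size b <= size (bstar ++ R))%N) ->
  let p := per bstar in
  let alpha := exponent (longest_prefix_with_period T' p) in
  periodic bstar ->
  p = per (bstar ++ R) ->
  (size bstar)%:R <= alpha * p%:R - (size R)%:R :> rat.
Proof.
move=> _ _ L R T' _ _ _ _ _ /and3P[_ bR_prefix _] _ p alpha _ p_per_bR.
have bR_period : has_period (bstar ++ R) p by rewrite p_per_bR has_period_per.
rewrite lerBrDr -natrD -size_cat.
exact: size_prefix_leq_exponent (per_gt0 _) bR_prefix bR_period.
Qed.
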